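(* $\{\omega \cdot 2, \omega^\star \cdot 2\} \leq_c \{\omega^2, (\omega^2)^\star\}$.
   Context: Structures have domains contained in $\omega$. For countable structures $\mathcal{A},\mathcal{B}$, the class $\{\mathcal{A},\mathcal{B}\}$ denotes the class of all structures (with domain $\subseteq\omega$) isomorphic to $\mathcal{A}$ or to $\mathcal{B}$. Linear orders are in the language $\{<\}$; $L^\star$ is the reverse of a linear order $L$; $\omega\cdot 2$, $\omega^2$ are ordinal order types. An enumeration operator $\Gamma$ is a c.e. set of pairs $(\alpha,\varphi)$ with $\alpha$ a finite set of basic (atomic or negated atomic) sentences of the input language with constants from $\omega$ and $\varphi$ a basic sentence of the output language with constants from $\omega$; $\Gamma(X)=\{\varphi : (\alpha,\varphi)\in\Gamma,\ \alpha\subseteq X\}$. $\Gamma$ is a computable embedding of $\mathcal{K}_0$ into $\mathcal{K}_1$ ($\mathcal{K}_0\leq_c\mathcal{K}_1$) if for every $\mathcal{A}\in\mathcal{K}_0$, $\Gamma$ applied to the atomic diagram of $\mathcal{A}$ is the atomic diagram of a structure $\Gamma(\mathcal{A})\in\mathcal{K}_1$, and for all $\mathcal{A},\mathcal{B}\in\mathcal{K}_0$, $\mathcal{A}\cong\mathcal{B}$ iff $\Gamma(\mathcal{A})\cong\Gamma(\mathcal{B})$. *)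

From Stdlib Require Import List Arith.
Import ListNotations.

(** Arities are handled loosely (inputs are lists of naturals); this does not
    change the class of computable partial functions. *)
Inductive recf : Type :=
| RZero : recf
| RSucc : recf
| RProj : nat -> recf
| RComp : recf -> list recf -> recf
| RPrimRec : recf -> recf -> recf
| RMu : recf -> recf.

Inductive reval : recf -> list nat -> nat -> Prop :=
| ev_zero v : reval RZero v 0
| ev_succ x v : reval RSucc (x :: v) (S x)
| ev_proj i v : i < length v -> reval (RProj i) v (nth i v 0)
| ev_comp f gs v ws y : revals gs v ws -> reval f ws y -> reval (RComp f gs) v y
| ev_prec0 f g v y : reval f v y -> reval (RPrimRec f g) (0 :: v) y
| ev_precS f g n v z y : reval (RPrimRec f g) (n :: v) z ->
    reval g (n :: z :: v) y -> reval (RPrimRec f g) (S n :: v) y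
| ev_mu f v n : reval f (n :: v) 0 ->
    (forall m, m < n -> exists k, reval f (m :: v) (S k)) -> reval (RMu f) v n
with revals : list recf -> list nat -> list nat -> Prop :=
| evs_nil v : revals [] v []
| evs_cons g gs v w ws : reval g v w -> revals gs v ws -> revals (g :: gs) v (w :: ws).

Definition ce (A : nat -> Prop) : Prop :=
  exists f : recf, forall n, A n <-> exists y, reval f [n] y.

Definition cpair (a b : nat) : nat := (a + b) * (a + b + 1) / 2 + b.

Inductive sentence : Type :=
| SEq : nat -> nat -> sentence
| SNeq : nat -> nat -> sentence
| SLt : nat -> nat -> sentence
| SNlt : nat -> nat -> sentence.

Definition code_sentence (s : sentence) : nat :=
  match s with
  | SEq a b => cpair 0 (cpair a b)
  | SNeq a b => cpair 1 (cpair a b)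
  | SLt a b => cpair 2 (cpair a b)
  | SNlt a b => cpair 3 (cpair a b)
  end.

Fixpoint code_list (l : list sentence) : nat :=
  match l with
  | [] => 0
  | s :: l' => S (cpair (code_sentence s) (code_list l'))
  end.

Record str : Type := mkStr { dom : nat -> Prop; rel : nat -> nat -> Prop }.

Definition holds (S : str) (s : sentence) : Prop :=
  match s with
  | SEq a b => dom S a /\ dom S b /\ a = b
  | SNeq a b => dom S a /\ dom S b /\ a <> b
  | SLt a b => dom S a /\ dom S b /\ rel S a b
  | SNlt a b => dom S a /\ dom S b /\ ~ rel S a b
  end.

Definition diagram (S : str) : sentence -> Prop := holds S.

Definition iso (A B : str) : Prop :=
  exists f : nat -> nat,
    (forall x, dom A x -> dom B (f x)) /\
    (forall x y, dom A x -> dom A y -> f x = f y -> x = y) /\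
    (forall y, dom B y -> exists x, dom A x /\ f x = y) /\
    (forall x y, dom A x -> dom A y -> (rel A x y <-> rel B (f x) (f y))).

Definition iso_to (A : str) (T : Type) (R : T -> T -> Prop) : Prop :=
  exists f : nat -> T,
    (forall x y, dom A x -> dom A y -> f x = f y -> x = y) /\
    (forall t, exists x, dom A x /\ f x = t) /\
    (forall x y, dom A x -> dom A y -> (rel A x y <-> R (f x) (f y))).

Definition rev_ord {T : Type} (R : T -> T -> Prop) : T -> T -> Prop := fun x y => R y x.

(** omega . 2 = omega + omega : lexicographic order on bool * nat, false first. *)
Definition lt_omega2 (p q : bool * nat) : Prop :=
  (fst p = false /\ fst q = true) \/ (fst p = fst q /\ snd p < snd q).

(** omega^* . 2 = omega^* + omega^* *)
Definition lt_omegastar2 (p q : bool * nat) : Prop :=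
  (fst p = false /\ fst q = true) \/ (fst p = fst q /\ rev_ord lt (snd p) (snd q)).

(** omega^2 = omega copies of omega : lexicographic order on nat * nat. *)
Definition lt_omegasq (p q : nat * nat) : Prop :=
  fst p < fst q \/ (fst p = fst q /\ snd p < snd q).

Definition class2 {T1 T2 : Type} (R1 : T1 -> T1 -> Prop) (R2 : T2 -> T2 -> Prop)
  (S : str) : Prop := iso_to S T1 R1 \/ iso_to S T2 R2.

(** * Enumeration operators. An operator is a relation between finite sets of
    basic sentences (given as lists) and basic sentences; it must be c.e. *)
Definition enum_op := list sentence -> sentence -> Prop.

Definition ce_op (G : enum_op) : Prop :=
  ce (fun n => exists alpha phi, G alpha phi /\
                 n = cpair (code_list alpha) (code_sentence phi)).

Definition apply_op (G : enum_op) (X : sentence -> Prop) : sentence -> Prop :=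
  fun phi => exists alpha, G alpha phi /\ forall psi, In psi alpha -> X psi.

Definition comp_embedding (G : enum_op) (K0 K1 : str -> Prop) : Prop :=
  ce_op G /\
  (forall A, K0 A -> exists B, K1 B /\ forall phi, apply_op G (diagram A) phi <-> diagram B phi) /\
  (forall A B GA GB, K0 A -> K0 B ->
     (forall phi, apply_op G (diagram A) phi <-> diagram GA phi) ->
     (forall phi, apply_op G (diagram B) phi <-> diagram GB phi) ->
     (iso A B <-> iso GA GB)).

Definition comp_reducible (K0 K1 : str -> Prop) : Prop :=
  exists G : enum_op, comp_embedding G K0 K1.

(* The embedding [Gamma] sends a linear order L to the order on (Cantor codes of) the
   pairs z <_L y admitting a witness x <_L z with y < x as natural numbers, ordered
   lexicographically.  If L = omega.2, a pair whose first coordinate z lies in the first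
   copy has y bounded by the code of a predecessor of z, so these pairs form a sequence of
   finite blocks, i.e. a copy of omega; every z in the second copy has arbitrarily large
   predecessors and contributes a copy of omega.  Hence Gamma(L) = omega + omega.omega =
   omega^2.  If L = omega^*.2, every z has arbitrarily large predecessors, all pairs z < y
   occur and Gamma(L) = (omega^2)^*.  In both classes exactly one order type has a least
   element and Gamma preserves this, so Gamma preserves and reflects isomorphism.  Gamma is
   an enumeration operator because membership of a code is a bounded arithmetic condition,
   which a mu-free program decides. *)

From Stdlib Require Import List Arith Bool Lia Classical ClassicalEpsilon.
Import ListNotations.

(** * Programs without minimisation *)

Inductive mu_free : recf -> Prop :=
| mu_free_zero : mu_free RZero
| mu_free_succ : mu_free RSucc
| mu_free_proj i : mu_free (RProj i)
| mu_free_comp f gs : mu_free f -> Forall mu_free gs -> mu_free (RComp f gs)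
| mu_free_primrec f g : mu_free f -> mu_free g -> mu_free (RPrimRec f g).

Scheme reval_mind := Induction for reval Sort Prop
  with revals_mind := Induction for revals Sort Prop.
Combined Scheme reval_revals_mind from reval_mind, revals_mind.

Lemma reval_revals_det :
  (forall f v y, reval f v y -> mu_free f -> forall y', reval f v y' -> y = y') /\
  (forall gs v ws, revals gs v ws -> Forall mu_free gs ->
     forall ws', revals gs v ws' -> ws = ws').
Proof.
  apply reval_revals_mind.
  - intros v _ y' H; inversion H; auto.
  - intros x v _ y' H; inversion H; auto.
  - intros i v _ _ y' H; inversion H; auto.
  - intros f gs v ws y _ IHgs _ IHf Hmu y' H. inversion Hmu; inversion H; subst.
    assert (ws = ws0) as <- by auto. auto.
  - intros f g v y _ IHf Hmu y' H. inversion Hmu; inversion H; subst. auto.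
  - intros f g n v z y _ IHrec _ IHg Hmu y' H. inversion Hmu; inversion H; subst.
    assert (z = z0) as <- by auto. auto.
  - intros f v n _ _ _ Hmu. inversion Hmu.
  - intros v _ ws' H; inversion H; auto.
  - intros g gs v w ws _ IHg _ IHgs Hmu ws' H. inversion Hmu; inversion H; subst.
    f_equal; auto.
Qed.

Lemma reval_det f v y y' : mu_free f -> reval f v y -> reval f v y' -> y = y'.
Proof. intros Hmu H. exact (proj1 reval_revals_det f v y H Hmu y'). Qed.

Lemma reval_proj i v y : i < length v -> nth i v 0 = y -> reval (RProj i) v y.
Proof. intros Hi <-. now apply ev_proj. Qed.

Lemma reval_comp1 f g v a y : reval g v a -> reval f [a] y -> reval (RComp f [g]) v y.
Proof. intros. eapply ev_comp; eauto. repeat constructor; auto. Qed.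

Lemma reval_comp2 f g h v a b y :
  reval g v a -> reval h v b -> reval f [a; b] y -> reval (RComp f [g; h]) v y.
Proof. intros. eapply ev_comp; eauto. repeat constructor; auto. Qed.

Ltac solve_proj := apply reval_proj; simpl; [lia | reflexivity].

Definition prog_add : recf := RPrimRec (RProj 0) (RComp RSucc [RProj 1]).
Definition prog_pred : recf := RPrimRec RZero (RProj 0).
Definition prog_monus : recf := RPrimRec (RProj 0) (RComp prog_pred [RProj 1]).
Definition prog_tri : recf :=
  RPrimRec RZero (RComp prog_add [RProj 1; RComp RSucc [RProj 0]]).

Fixpoint prog_const (k : nat) : recf :=
  match k with 0 => RZero | S k' => RComp RSucc [prog_const k'] end.

Lemma reval_add n m : reval prog_add [n; m] (n + m).
Proof.
  induction n; simpl.
  - apply ev_prec0. solve_proj.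
  - eapply ev_precS; [exact IHn|]. eapply reval_comp1; [solve_proj | apply ev_succ].
Qed.

Lemma reval_pred n : reval prog_pred [n] (pred n).
Proof.
  induction n; simpl.
  - apply ev_prec0, ev_zero.
  - eapply ev_precS; [exact IHn | solve_proj].
Qed.

Lemma reval_monus b a : reval prog_monus [b; a] (a - b).
Proof.
  induction b.
  - apply ev_prec0. rewrite Nat.sub_0_r. solve_proj.
  - eapply ev_precS; [exact IHb|]. replace (a - S b) with (pred (a - b)) by lia.
    eapply reval_comp1; [solve_proj | apply reval_pred].
Qed.

Fixpoint tri (s : nat) : nat := match s with 0 => 0 | S s' => tri s' + S s' end.

Lemma reval_tri s : reval prog_tri [s] (tri s).
Proof.
  induction s; simpl.
  - apply ev_prec0, ev_zero.
  - eapply ev_precS; [exact IHs|]. eapply reval_comp2; [solve_proj | | apply reval_add].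
    eapply reval_comp1; [solve_proj | apply ev_succ].
Qed.

Lemma reval_const k v : reval (prog_const k) v k.
Proof. induction k; simpl; [apply ev_zero | eapply reval_comp1; eauto using ev_succ]. Qed.

Lemma cpair_tri a b : cpair a b = tri (a + b) + b.
Proof.
  assert (Htri : forall s, s * (s + 1) = tri s * 2) by (induction s; simpl; lia).
  unfold cpair. now rewrite Htri, Nat.div_mul.
Qed.

Lemma cpair_inj a b a' b' : cpair a b = cpair a' b' -> a = a' /\ b = b'.
Proof.
  assert (Hmono : forall s s', s < s' -> tri s + s < tri s') by (induction 1; simpl; lia).
  rewrite !cpair_tri. intros H.
  destruct (lt_eq_lt_dec (a + b) (a' + b')) as [[Hl|He]|Hl].
  - specialize (Hmono _ _ Hl). lia.
  - rewrite He in H. lia.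
  - specialize (Hmono _ _ Hl). lia.
Qed.

Lemma cpair_ge a b : a <= cpair a b /\ b <= cpair a b.
Proof.
  assert (Htri : forall s, s <= tri s) by (induction s; simpl; lia).
  rewrite cpair_tri. specialize (Htri (a + b)). lia.
Qed.

(** * Bounded arithmetic conditions define c.e. sets *)

Inductive aexp : Type :=
| AVar (i : nat)
| AConst (k : nat)
| AAdd (a b : aexp)
| ASub (a b : aexp)
| APair (a b : aexp)
| ASum (b e : aexp).

Fixpoint bsum (g : nat -> nat) (m : nat) : nat :=
  match m with 0 => g 0 | S m' => bsum g m' + g (S m') end.

(* [ASum b e] binds a new variable 0 in [e], ranging over [0 .. b]. *)
Fixpoint eval (e : aexp) (v : list nat) : nat :=
  match e with
  | AVar i => nth i v 0
  | AConst k => k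
  | AAdd a b => eval a v + eval b v
  | ASub a b => eval a v - eval b v
  | APair a b => cpair (eval a v) (eval b v)
  | ASum b e => bsum (fun i => eval e (i :: v)) (eval b v)
  end.

Fixpoint wf (e : aexp) (k : nat) : bool :=
  match e with
  | AVar i => i <? k
  | AConst _ => true
  | AAdd a b | ASub a b | APair a b => wf a k && wf b k
  | ASum b e => wf b k && wf e (S k)
  end.

Fixpoint projs (s k : nat) : list recf :=
  match k with 0 => [] | S k' => RProj s :: projs (S s) k' end.

Definition prog_bsum (p : recf) (k : nat) : recf :=
  RPrimRec (RComp p (prog_const 0 :: projs 0 k))
           (RComp prog_add [RProj 1; RComp p (RComp RSucc [RProj 0] :: projs 2 k)]).

Fixpoint compile (e : aexp) (k : nat) : recf :=
  match e with
  | AVar i => RProj i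
  | AConst c => prog_const c
  | AAdd a b => RComp prog_add [compile a k; compile b k]
  | ASub a b => RComp prog_monus [compile b k; compile a k]
  | APair a b =>
      RComp prog_add [RComp prog_tri [RComp prog_add [compile a k; compile b k]]; compile b k]
  | ASum b e => RComp (prog_bsum (compile e (S k)) k) (compile b k :: projs 0 k)
  end.

Lemma revals_projs v pre : revals (projs (length pre) (length v)) (pre ++ v) v.
Proof.
  revert pre; induction v as [|x v IH]; intros pre; simpl; constructor.
  - apply reval_proj; [rewrite length_app; simpl; lia|].
    rewrite app_nth2, Nat.sub_diag by lia. reflexivity.
  - specialize (IH (pre ++ [x])). rewrite length_app, <- app_assoc, Nat.add_1_r in IH.
    exact IH.
Qed.

Lemma reval_bsum p g v m :
  (forall i, reval p (i :: v) (g i)) -> reval (prog_bsum p (length v)) (m :: v) (bsum g m).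
Proof.
  intros Hp. induction m; simpl.
  - apply ev_prec0. eapply ev_comp; [|apply Hp].
    constructor; [apply reval_const | exact (revals_projs v [])].
  - eapply ev_precS; [exact IHm|]. eapply reval_comp2; [solve_proj| |apply reval_add].
    eapply ev_comp; [|apply Hp]. constructor.
    + eapply reval_comp1; [solve_proj | apply ev_succ].
    + exact (revals_projs v [m; bsum g m]).
Qed.

Theorem compile_correct e v : wf e (length v) = true -> reval (compile e (length v)) v (eval e v).
Proof.
  revert v; induction e; intros v Hwf; simpl in Hwf |- *;
    repeat match goal with H : (_ && _) = true |- _ => apply andb_prop in H as [? ?] end.
  - apply ev_proj. now apply Nat.ltb_lt.
  - apply reval_const.
  - eapply reval_comp2; eauto using reval_add.
  - eapply reval_comp2; eauto using reval_monus.
  - rewrite cpair_tri. eapply reval_comp2; [|eauto|apply reval_add].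
    eapply reval_comp1; [|apply reval_tri]. eapply reval_comp2; eauto using reval_add.
  - eapply ev_comp.
    + constructor; [eauto | exact (revals_projs v [])].
    + apply reval_bsum. intros i. now apply (IHe2 (i :: v)).
Qed.

Lemma compile_mu_free e k : mu_free (compile e k).
Proof.
  assert (Hprojs : forall s n, Forall mu_free (projs s n))
    by (intros s n; revert s; induction n; simpl; constructor; auto using mu_free).
  assert (Hconst : forall c, mu_free (prog_const c))
    by (induction c; simpl; repeat constructor; auto).
  induction e in k |- *; simpl;
    repeat (constructor || apply Hprojs || apply Hconst || auto).
Qed.

Inductive form : Type :=
| FEq (a b : aexp)
| FLt (a b : aexp)
| FNot (p : form)
| FAnd (p q : form)
| FOr (p q : form)
| FEx (b : aexp) (p : form).

Fixpoint fholds (p : form) (v : list nat) : Prop :=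
  match p with
  | FEq a b => eval a v = eval b v
  | FLt a b => eval a v < eval b v
  | FNot p => ~ fholds p v
  | FAnd p q => fholds p v /\ fholds q v
  | FOr p q => fholds p v \/ fholds q v
  | FEx b p => exists i, i <= eval b v /\ fholds p (i :: v)
  end.

Definition ANot (a : aexp) : aexp := ASub (AConst 1) a.

Fixpoint fexp (p : form) : aexp :=
  match p with
  | FEq a b => ANot (AAdd (ASub a b) (ASub b a))
  | FLt a b => ASub b a
  | FNot p => ANot (fexp p)
  | FAnd p q => ANot (AAdd (ANot (fexp p)) (ANot (fexp q)))
  | FOr p q => AAdd (fexp p) (fexp q)
  | FEx b p => ASum b (fexp p)
  end.

Lemma bsum_pos g m : 0 < bsum g m <-> exists i, i <= m /\ 0 < g i.
Proof.
  induction m; simpl.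
  - split; [eauto | intros (i & Hi & Hg); now replace i with 0 in Hg by lia].
  - split.
    + intros H. destruct (Nat.eq_dec (g (S m)) 0).
      * destruct (proj1 IHm) as (i & Hi & Hg); [lia|]. exists i. split; [lia | auto].
      * exists (S m). split; [auto | lia].
    + intros (i & Hi & Hg). destruct (Nat.eq_dec i (S m)) as [->|]; [lia|].
      enough (0 < bsum g m) by lia. apply IHm. exists i. split; [lia | auto].
Qed.

Lemma fexp_pos p v : 0 < eval (fexp p) v <-> fholds p v.
Proof.
  induction p in v |- *; cbn [fexp fholds ANot eval].
  - lia.
  - lia.
  - rewrite <- IHp. lia.
  - rewrite <- IHp1, <- IHp2. lia.
  - rewrite <- IHp1, <- IHp2. lia.
  - rewrite bsum_pos. now setoid_rewrite IHp.
Qed.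

(* The search variable of [RMu] is ignored; the search stops at once iff [p] holds. *)
Theorem ce_fholds p : wf (fexp p) 1 = true -> ce (fun n => fholds p [n]).
Proof.
  intros Hwf. set (test := RComp (compile (ANot (fexp p)) 1) [RProj 1]).
  assert (Htest : forall m n, reval test [m; n] (1 - eval (fexp p) [n])).
  { intros m n. eapply reval_comp1; [solve_proj|]. apply (compile_correct (ANot (fexp p)) [n]).
    simpl. now rewrite Hwf. }
  exists (RMu test). intros n. rewrite <- fexp_pos. split.
  - intros Hpos. exists 0. apply ev_mu; [|lia].
    replace 0 with (1 - eval (fexp p) [n]) at 2 by lia. apply Htest.
  - intros [y Hy]. inversion Hy as [| | | | | | ? ? ? Hzero _]; subst.
    assert (Hmu : mu_free test) by (repeat constructor; apply compile_mu_free).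
    pose proof (reval_det _ _ _ _ Hmu Hzero (Htest y n)). lia.
Qed.

(** * The enumeration operator *)

Definition dom_facts (z y x : nat) : list sentence := [SLt z y; SLt x z].

Inductive Gamma : list sentence -> sentence -> Prop :=
| Gamma_eq z y x : y < x ->
    Gamma (dom_facts z y x) (SEq (cpair z y) (cpair z y))
| Gamma_neq z y x z' y' x' : y < x -> y' < x' -> (z, y) <> (z', y') ->
    Gamma (dom_facts z y x ++ dom_facts z' y' x') (SNeq (cpair z y) (cpair z' y'))
| Gamma_lt_fst z y x z' y' x' : y < x -> y' < x' ->
    Gamma (SLt z z' :: dom_facts z y x ++ dom_facts z' y' x')
      (SLt (cpair z y) (cpair z' y'))
| Gamma_lt_snd z y x y' x' : y < x -> y' < x' ->
    Gamma (SLt y y' :: dom_facts z y x ++ dom_facts z y' x')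
      (SLt (cpair z y) (cpair z y'))
| Gamma_nlt_fst z y x z' y' x' : y < x -> y' < x' ->
    Gamma (SLt z' z :: dom_facts z y x ++ dom_facts z' y' x')
      (SNlt (cpair z y) (cpair z' y'))
| Gamma_nlt_snd z y x y' x' : y < x -> y' < x' ->
    Gamma (SLt y' y :: dom_facts z y x ++ dom_facts z y' x')
      (SNlt (cpair z y) (cpair z y'))
| Gamma_nlt_refl z y x : y < x ->
    Gamma (dom_facts z y x) (SNlt (cpair z y) (cpair z y)).

(* Tags as in [code_sentence]: 0 for [SEq], 1 for [SNeq], 2 for [SLt], 3 for [SNlt]. *)
Definition ESent (tag : nat) (a b : aexp) : aexp := APair (AConst tag) (APair a b).

Fixpoint EList (l : list aexp) : aexp :=
  match l with [] => AConst 0 | s :: l' => AAdd (AConst 1) (APair s (EList l')) end.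

Definition EDom (z y x : aexp) : list aexp := [ESent 2 z y; ESent 2 x z].

Definition EIs_code (alpha : list aexp) (phi : aexp) (n : aexp) : form :=
  FEq (APair (EList alpha) phi) n.

Section GammaCode.

(* Variables of the body of [Gamma_code] below, in the environment [x'; y'; z'; x; y; z; n]. *)
Let x' := AVar 0.
Let y' := AVar 1.
Let z' := AVar 2.
Let x := AVar 3.
Let y := AVar 4.
Let z := AVar 5.
Let n := AVar 6.
Let p := APair z y.
Let p' := APair z' y'.

Definition Gamma_cases : form :=
  FOr (FAnd (FLt y x) (EIs_code (EDom z y x) (ESent 0 p p) n))
  (FOr (FAnd (FLt y x) (FAnd (FLt y' x') (FAnd (FNot (FAnd (FEq z z') (FEq y y')))
         (EIs_code (EDom z y x ++ EDom z' y' x') (ESent 1 p p') n))))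
  (FOr (FAnd (FLt y x) (FAnd (FLt y' x')
         (EIs_code (ESent 2 z z' :: EDom z y x ++ EDom z' y' x') (ESent 2 p p') n)))
  (FOr (FAnd (FLt y x) (FAnd (FLt y' x')
         (EIs_code (ESent 2 y y' :: EDom z y x ++ EDom z y' x') (ESent 2 p (APair z y')) n)))
  (FOr (FAnd (FLt y x) (FAnd (FLt y' x')
         (EIs_code (ESent 2 z' z :: EDom z y x ++ EDom z' y' x') (ESent 3 p p') n)))
  (FOr (FAnd (FLt y x) (FAnd (FLt y' x')
         (EIs_code (ESent 2 y' y :: EDom z y x ++ EDom z y' x') (ESent 3 p (APair z y')) n)))
       (FAnd (FLt y x) (EIs_code (EDom z y x) (ESent 3 p p) n))))))).

End GammaCode.

Definition Gamma_code : form :=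
  FEx (AVar 0) (FEx (AVar 1) (FEx (AVar 2) (FEx (AVar 3) (FEx (AVar 4) (FEx (AVar 5)
    Gamma_cases))))).

Definition args_le (m : nat) (s : sentence) : Prop :=
  match s with SEq a b | SNeq a b | SLt a b | SNlt a b => a <= m /\ b <= m end.

Lemma code_list_bounds alpha k : Forall (args_le (cpair (code_list alpha) k)) alpha.
Proof.
  assert (Hsent : forall s, args_le (code_sentence s) s).
  { intros [a b|a b|a b|a b]; simpl;
      match goal with |- _ <= cpair ?t _ /\ _ => pose proof (cpair_ge t (cpair a b)) end;
      pose proof (cpair_ge a b); lia. }
  assert (Hlist : forall s l, In s l -> code_sentence s <= code_list l).
  { induction l as [|s' l IH]; simpl; [tauto|].
    pose proof (cpair_ge (code_sentence s') (code_list l)).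
    intros [<- | Hs]; [|specialize (IH Hs)]; lia. }
  apply Forall_forall. intros s Hs. specialize (Hsent s).
  pose proof (Hlist s alpha Hs). pose proof (cpair_ge (code_list alpha) k).
  destruct s; simpl in *; lia.
Qed.

Ltac gamma_rule c := do 2 eexists; split; [eapply c | reflexivity].

Ltac bounded_witnesses a b c d e f :=
  exists a; split; [lia|]; exists b; split; [lia|]; exists c; split; [lia|];
  exists d; split; [lia|]; exists e; split; [lia|]; exists f; split; [lia|].

Lemma Gamma_code_spec n : fholds Gamma_code [n] <->
  exists alpha phi, Gamma alpha phi /\ n = cpair (code_list alpha) (code_sentence phi).
Proof.
  split.
  - intros (z & _ & y & _ & x & _ & z' & _ & y' & _ & x' & _ & H).
    simpl in H. destruct H as [H|[H|[H|[H|[H|[H|H]]]]]];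
      repeat match type of H with _ /\ _ => destruct H as [? H] end; subst n;
      [ gamma_rule Gamma_eq | gamma_rule Gamma_neq | gamma_rule Gamma_lt_fst
      | gamma_rule Gamma_lt_snd | gamma_rule Gamma_nlt_fst | gamma_rule Gamma_nlt_snd
      | gamma_rule Gamma_nlt_refl ];
      try assumption.
    intros [= -> ->]; tauto.
  - intros (alpha & phi & HG & Hn).
    pose proof (code_list_bounds alpha (code_sentence phi)) as Hb. rewrite <- Hn in Hb.
    destruct HG as [z y x|z y x z' y' x'|z y x z' y' x'|z y x y' x'|z y x z' y' x'
                   |z y x y' x'|z y x];
      unfold dom_facts in Hb; simpl in Hb; rewrite !Forall_cons_iff in Hb; simpl in Hb |- *.
    + bounded_witnesses z y x 0 0 0. left. rewrite Hn. auto.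
    + bounded_witnesses z y x z' y' x'. right; left.
      rewrite Hn. repeat split; auto. intros [-> ->]; auto.
    + bounded_witnesses z y x z' y' x'. do 2 right; left. rewrite Hn. auto.
    + bounded_witnesses z y x 0 y' x'. do 3 right; left. rewrite Hn. auto.
    + bounded_witnesses z y x z' y' x'. do 4 right; left. rewrite Hn. auto.
    + bounded_witnesses z y x 0 y' x'. do 5 right; left. rewrite Hn. auto.
    + bounded_witnesses z y x 0 0 0. do 6 right. rewrite Hn. auto.
Qed.

Theorem Gamma_ce : ce_op Gamma.
Proof.
  destruct (ce_fholds Gamma_code eq_refl) as [f Hf].
  exists f. intros n. rewrite <- Gamma_code_spec. apply Hf.
Qed.

Record linear_order (S : str) : Prop := {
  lo_irrefl : forall a, dom S a -> ~ rel S a a;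
  lo_trans : forall a b c, dom S a -> dom S b -> dom S c -> rel S a b -> rel S b c -> rel S a c;
  lo_total : forall a b, dom S a -> dom S b -> a <> b -> rel S a b \/ rel S b a
}.

Lemma lo_asym S a b : linear_order S -> dom S a -> dom S b -> rel S a b -> ~ rel S b a.
Proof. intros HS Ha Hb Hab Hba. apply (lo_irrefl S HS a Ha). eapply lo_trans; eauto. Qed.

Definition gamma_dom (S : str) (e : nat) : Prop :=
  exists z y x, e = cpair z y /\ y < x /\ holds S (SLt z y) /\ holds S (SLt x z).

Definition gamma_rel (S : str) (e e' : nat) : Prop :=
  exists z y z' y', e = cpair z y /\ e' = cpair z' y' /\
    (rel S z z' \/ (z = z' /\ rel S y y')).

Definition gamma (S : str) : str := mkStr (gamma_dom S) (gamma_rel S).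

Lemma gamma_rel_cpair S z y z' y' :
  gamma_rel S (cpair z y) (cpair z' y') <-> rel S z z' \/ (z = z' /\ rel S y y').
Proof.
  split.
  - intros (z0 & y0 & z1 & y1 & E & E' & H).
    apply cpair_inj in E as [-> ->]. apply cpair_inj in E' as [-> ->]. exact H.
  - intros H. exists z, y, z', y'. auto.
Qed.

Lemma gamma_dom_intro S z y x : y < x -> rel S z y -> rel S x z ->
  dom S z -> dom S y -> dom S x -> gamma_dom S (cpair z y).
Proof. intros. exists z, y, x. cbn. tauto. Qed.

Lemma Gamma_sound S alpha phi : linear_order S -> Gamma alpha phi ->
  Forall (holds S) alpha -> holds (gamma S) phi.
Proof.
  intros HS HG Hal.
  destruct HG as [z y x|z y x z' y' x'|z y x z' y' x'|z y x y' x'|z y x z' y' x'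
                 |z y x y' x'|z y x];
    unfold dom_facts in Hal;
    repeat (rewrite Forall_app in Hal || rewrite Forall_cons_iff in Hal);
    cbn [holds gamma dom rel] in *;
    repeat match goal with H : _ /\ _ |- _ => destruct H end;
    repeat split; try solve [eapply gamma_dom_intro; eauto];
    rewrite ?gamma_rel_cpair.
  - intros E. apply cpair_inj in E as [-> ->]. auto.
  - left; assumption.
  - right; auto.
  - intros [Hr | [<- Hr]]; [apply (lo_asym S z z') | apply (lo_irrefl S HS z)]; auto.
  - intros [Hr | [_ Hr]]; [apply (lo_irrefl S HS z) | apply (lo_asym S y y')]; auto.
  - intros [Hr | [_ Hr]]; [apply (lo_irrefl S HS z) | apply (lo_irrefl S HS y)]; auto.
Qed.

Ltac holds_facts := unfold dom_facts; simpl in *; repeat constructor; tauto.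

Lemma Gamma_complete S phi : linear_order S -> holds (gamma S) phi ->
  exists alpha, Gamma alpha phi /\ Forall (holds S) alpha.
Proof.
  intros HS.
  destruct phi as [a b|a b|a b|a b]; cbn [holds gamma dom rel]; intros (Ha & Hb & H);
    destruct Ha as (z & y & x & -> & Hyx & Hzy & Hxz);
    destruct Hb as (z' & y' & x' & -> & Hyx' & Hzy' & Hxz');
    rewrite ?gamma_rel_cpair in H.
  - rewrite <- H. eexists; split; [apply (Gamma_eq z y x) | holds_facts]; auto.
  - eexists; split; [apply (Gamma_neq z y x z' y' x') | holds_facts]; auto.
    intros [= -> ->]. auto.
  - destruct H as [Hr | [<- Hr]].
    + eexists; split; [apply (Gamma_lt_fst z y x z' y' x') | holds_facts]; auto.
    + eexists; split; [apply (Gamma_lt_snd z y x y' x') | holds_facts]; auto.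
  - assert (Hdom : dom S z /\ dom S y /\ dom S z' /\ dom S y') by (simpl in *; tauto).
    destruct (Nat.eq_dec z z') as [<- | Hz]; [destruct (Nat.eq_dec y y') as [<- | Hy] |].
    + eexists; split; [apply (Gamma_nlt_refl z y x) | holds_facts]; auto.
    + destruct (lo_total S HS y y') as [Hr | Hr]; try tauto.
      eexists; split; [apply (Gamma_nlt_snd z y x y' x') | holds_facts]; auto.
    + destruct (lo_total S HS z z') as [Hr | Hr]; try tauto.
      eexists; split; [apply (Gamma_nlt_fst z y x z' y' x') | holds_facts]; auto.
Qed.

Theorem Gamma_diagram S : linear_order S ->
  forall phi, apply_op Gamma (diagram S) phi <-> diagram (gamma S) phi.
Proof.
  intros HS phi. unfold apply_op, diagram. split.
  - intros (alpha & HG & Hal). eapply Gamma_sound; eauto. now apply Forall_forall.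
  - intros Hphi. destruct (Gamma_complete S phi HS Hphi) as (alpha & HG & Hal).
    exists alpha. split; [exact HG | now apply Forall_forall].
Qed.

(** * Isomorphisms and least elements *)

Definition iso_via (S : str) {T : Type} (R : T -> T -> Prop) (f : nat -> T) (g : T -> nat) :
  Prop :=
  (forall t, dom S (g t) /\ f (g t) = t) /\
  (forall x, dom S x -> g (f x) = x) /\
  (forall x y, dom S x -> dom S y -> (rel S x y <-> R (f x) (f y))).

Lemma iso_to_inverse S T R : iso_to S T R -> exists f g, @iso_via S T R f g.
Proof.
  intros (f & Hinj & Hsur & Hrel).
  exists f, (fun t => proj1_sig (constructive_indefinite_description _ (Hsur t))).
  split; [|split; [|exact Hrel]].
  - intros t. exact (proj2_sig (constructive_indefinite_description _ (Hsur t))).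
  - intros x Hx. destruct (constructive_indefinite_description _ (Hsur (f x))) as [y [Hy Hf]].
    now apply Hinj.
Qed.

Section Via.

Context {St : str} {T : Type} {R : T -> T -> Prop} {f : nat -> T} {g : T -> nat}.
Hypothesis HSt : iso_via St R f g.

Lemma via_dom t : dom St (g t).
Proof. apply HSt. Qed.

Lemma via_fg t : f (g t) = t.
Proof. apply HSt. Qed.

Lemma via_onto x : dom St x -> x = g (f x).
Proof. intros Hx. symmetry. now apply HSt. Qed.

Lemma via_g_inj p q : g p = g q -> p = q.
Proof. intros E. now rewrite <- (via_fg p), E, via_fg. Qed.

Lemma via_rel_f x y : dom St x -> dom St y -> (rel St x y <-> R (f x) (f y)).
Proof. apply HSt. Qed.

Lemma via_rel p q : rel St (g p) (g q) <-> R p q.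
Proof. destruct HSt as (_ & _ & Hrel). rewrite Hrel by apply via_dom. now rewrite !via_fg. Qed.

End Via.

Lemma iso_of_iso_to A B T R : iso_to A T R -> iso_to B T R -> iso A B.
Proof.
  intros (fa & ga & HA)%iso_to_inverse (fb & gb & HB)%iso_to_inverse.
  exists (fun x => gb (fa x)). repeat split.
  - intros x _. apply (via_dom HB).
  - intros x y Hx Hy E. apply (via_g_inj HB), (f_equal ga) in E.
    now rewrite <- (via_onto HA x Hx), <- (via_onto HA y Hy) in E.
  - intros y Hy. exists (ga (fb y)). split; [apply (via_dom HA)|].
    now rewrite (via_fg HA), <- (via_onto HB y Hy).
  - intros Hr. apply (via_rel HB), (via_rel_f HA); auto.
  - intros Hr. apply (via_rel HB), (via_rel_f HA) in Hr; auto.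
Qed.

Lemma diagram_ext A A' : (forall phi, diagram A phi <-> diagram A' phi) ->
  (forall a, dom A a <-> dom A' a) /\
  (forall a b, dom A a -> dom A b -> (rel A a b <-> rel A' a b)).
Proof.
  intros E. assert (D : forall a, dom A a <-> dom A' a)
    by (intros a; specialize (E (SEq a a)); simpl in E; tauto).
  split; [exact D|]. intros a b Ha Hb. specialize (E (SLt a b)).
  pose proof (proj1 (D a) Ha). pose proof (proj1 (D b) Hb). simpl in E. tauto.
Qed.

Lemma iso_diagram A A' B B' :
  (forall phi, diagram A phi <-> diagram A' phi) ->
  (forall phi, diagram B phi <-> diagram B' phi) -> iso A B -> iso A' B'.
Proof.
  intros EA EB (f & Hd & Hinj & Hsur & Hrel).
  destruct (diagram_ext A A' EA) as [DA RA], (diagram_ext B B' EB) as [DB RB].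
  exists f. repeat split.
  - intros a Ha. apply DB, Hd, DA, Ha.
  - intros a a' Ha Ha'. apply Hinj; apply DA; assumption.
  - intros b Hb. destruct (Hsur b (proj2 (DB b) Hb)) as (a & Ha & <-). exists a. now rewrite <- DA.
  - intros Hr. rewrite <- DA in *. rewrite <- RB, <- Hrel, RA; auto.
  - intros Hr. rewrite <- DA in *. rewrite <- RB, <- Hrel, RA in Hr; auto.
Qed.

Definition has_least (S : str) : Prop :=
  exists a, dom S a /\ forall b, dom S b -> b <> a -> rel S a b.

Definition has_least_rel {T : Type} (R : T -> T -> Prop) : Prop :=
  exists t, forall t', t' <> t -> R t t'.

Lemma iso_has_least A B : iso A B -> (has_least A <-> has_least B).
Proof.
  intros (f & Hd & Hinj & Hsur & Hrel). split.
  - intros (a & Ha & H). exists (f a). split; auto.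
    intros b Hb Hne. destruct (Hsur b Hb) as (x & Hx & <-).
    apply Hrel; auto.
  - intros (b & Hb & H). destruct (Hsur b Hb) as (a & Ha & <-).
    exists a. split; auto. intros x Hx Hne. apply Hrel; auto.
Qed.

Lemma iso_to_has_least S T R : iso_to S T R -> (has_least S <-> has_least_rel R).
Proof.
  intros (f & g & HS)%iso_to_inverse. split.
  - intros (a & Ha & H). exists (f a). intros t Hne.
    rewrite <- (via_fg HS t). apply (via_rel_f HS); [auto | apply (via_dom HS) |].
    apply H; [apply (via_dom HS)|]. intros E. apply Hne. now rewrite <- E, (via_fg HS).
  - intros [t H]. exists (g t). split; [apply (via_dom HS)|]. intros b Hb Hne.
    rewrite (via_onto HS b Hb), (via_rel HS). apply H.
    intros E. apply Hne. now rewrite (via_onto HS b Hb), E.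
Qed.

Lemma iso_class2_iff {T1 T2 : Type} (R1 : T1 -> T1 -> Prop) (R2 : T2 -> T2 -> Prop) A B :
  has_least_rel R1 -> ~ has_least_rel R2 -> class2 R1 R2 A -> class2 R1 R2 B ->
  (iso A B <-> (has_least A <-> has_least B)).
Proof.
  intros H1 H2 HA HB. split; [apply iso_has_least|].
  destruct HA as [HA|HA], HB as [HB|HB];
    rewrite (iso_to_has_least _ _ _ HA), (iso_to_has_least _ _ _ HB);
    eauto using iso_of_iso_to; tauto.
Qed.

(** * Orders of type omega and omega^2 *)

Section OmegaType.

Variable X : str.
Hypothesis HX : linear_order X.
Hypothesis finite_pred : forall a, dom X a -> exists l, forall b, dom X b -> rel X b a -> In b l.
Hypothesis inhabited : exists a, dom X a.
Hypothesis no_max : forall a, dom X a -> exists b, dom X b /\ rel X a b.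

Definition pred_list (a : nat) (l : list nat) : Prop :=
  NoDup l /\ forall b, In b l <-> dom X b /\ rel X b a.

Lemma pred_list_exists a : dom X a -> exists l, pred_list a l.
Proof.
  intros Ha. destruct (finite_pred a Ha) as [l Hl].
  set (is_pred b := if excluded_middle_informative (dom X b /\ rel X b a) then true else false).
  exists (nodup Nat.eq_dec (filter is_pred l)). split; [apply NoDup_nodup|].
  intros b. rewrite nodup_In, filter_In. unfold is_pred.
  destruct excluded_middle_informative as [H|H]; split; try tauto.
  - intros. split; [apply Hl|]; tauto.
  - intros [_ E]; discriminate.
Qed.

Definition rank (a : nat) : nat :=
  match excluded_middle_informative (exists l, pred_list a l) with
  | left H => length (proj1_sig (constructive_indefinite_description _ H))
  | right _ => 0
  end.

Lemma rank_spec a : dom X a -> exists l, pred_list a l /\ rank a = length l.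
Proof.
  intros Ha. unfold rank. destruct excluded_middle_informative as [H|H].
  - destruct (constructive_indefinite_description _ H) as [l Hl]. eauto.
  - exfalso. exact (H (pred_list_exists a Ha)).
Qed.

Lemma rank_lt a b : dom X a -> dom X b -> rel X a b -> rank a < rank b.
Proof.
  intros Ha Hb Hab. destruct (rank_spec a Ha) as (la & [Na Ma] & ->).
  destruct (rank_spec b Hb) as (lb & [Nb Mb] & ->).
  apply (NoDup_incl_length (l' := lb) (l := a :: la)).
  - constructor; auto. intros Hin. apply Ma in Hin. apply (lo_irrefl X HX a); tauto.
  - intros c [<-|Hc]; apply Mb; auto. apply Ma in Hc.
    split; [tauto|]. apply (lo_trans X HX c a b); tauto.
Qed.

Lemma rank_inj a b : dom X a -> dom X b -> rank a = rank b -> a = b.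
Proof.
  intros Ha Hb E. destruct (Nat.eq_dec a b) as [|Hne]; auto.
  destruct (lo_total X HX a b Ha Hb Hne) as [H|H]; apply rank_lt in H; auto; lia.
Qed.

Lemma rank_unbounded n : exists a, dom X a /\ n <= rank a.
Proof.
  induction n as [|n (a & Ha & Hn)].
  - destruct inhabited as [a Ha]. exists a. split; [auto | lia].
  - destruct (no_max a Ha) as (b & Hb & Hab). exists b. split; auto.
    pose proof (rank_lt a b Ha Hb Hab). lia.
Qed.

(* The predecessors of [b] have distinct ranks below [rank b], so they take all of them. *)
Lemma rank_surj n : exists a, dom X a /\ rank a = n.
Proof.
  destruct (rank_unbounded (S n)) as (b & Hb & Hn).
  destruct (rank_spec b Hb) as (l & [Nl Ml] & Hl).
  assert (Hcover : incl (seq 0 (rank b)) (map rank l)).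
  { apply NoDup_length_incl.
    - apply NoDup_map_NoDup_ForallPairs; auto.
      intros x y Hx Hy. apply rank_inj; apply Ml; auto.
    - now rewrite length_map, length_seq, Hl.
    - intros k Hk. apply in_map_iff in Hk as (a & <- & Ha). apply Ml in Ha.
      apply in_seq. pose proof (rank_lt a b (proj1 Ha) Hb (proj2 Ha)). lia. }
  destruct (proj1 (in_map_iff _ _ _) (Hcover n ltac:(apply in_seq; lia))) as (a & Ha & Hin).
  exists a. split; auto. now apply Ml.
Qed.

Theorem iso_omega : iso_to X nat lt.
Proof.
  exists rank. split; [exact rank_inj | split; [exact rank_surj|]].
  intros a b Ha Hb. split; [apply rank_lt; auto|].
  intros Hlt. destruct (Nat.eq_dec a b) as [->|Hne]; [lia|].
  destruct (lo_total X HX a b Ha Hb Hne) as [H|H]; auto.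
  apply rank_lt in H; auto. lia.
Qed.

End OmegaType.

Definition row_str (X : str) (row : nat -> nat) (r : nat) : str :=
  mkStr (fun a => dom X a /\ row a = r) (rel X).

Lemma linear_order_row X row r : linear_order X -> linear_order (row_str X row r).
Proof.
  intros HX. split; simpl.
  - intros a [Ha _]. now apply lo_irrefl.
  - intros a b c [Ha _] [Hb _] [Hc _]. now apply lo_trans.
  - intros a b [Ha _] [Hb _]. now apply lo_total.
Qed.

(* Each row has type omega by [iso_omega], and the rows follow each other like [nat]. *)
Theorem iso_omegasq_of_rows (X : str) (row : nat -> nat) :
  linear_order X ->
  (forall a b, dom X a -> dom X b -> rel X a b -> row a <= row b) ->
  (forall a, dom X a -> exists l, forall b, dom X b -> row b = row a -> rel X b a -> In b l) ->
  (forall r, exists a, dom X a /\ row a = r) ->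
  (forall a, dom X a -> exists b, dom X b /\ row b = row a /\ rel X a b) ->
  iso_to X (nat * nat) lt_omegasq.
Proof.
  intros HX Hmono Hfin Hne Hnomax.
  assert (Hrow : forall r, iso_to (row_str X row r) nat lt).
  { intros r. apply iso_omega; simpl.
    - now apply linear_order_row.
    - intros a [Ha <-]. destruct (Hfin a Ha) as [l Hl]. exists l. intros b [Hb Hr]. auto.
    - apply Hne.
    - intros a [Ha <-]. destruct (Hnomax a Ha) as (b & Hb & Hr & Hab). eauto. }
  unfold iso_to in Hrow. apply choice in Hrow as (h & Hh). simpl in Hh.
  exists (fun a => (row a, h (row a) a)). split; [|split].
  - intros a b Ha Hb [= E1 E2]. destruct (Hh (row a)) as [I _].
    apply I; auto. rewrite E1 at 2. auto.
  - intros [r n]. destruct (Hh r) as (_ & Su & _). destruct (Su n) as (a & [Ha <-] & Hn).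
    exists a. now rewrite Hn.
  - intros a b Ha Hb. unfold lt_omegasq; simpl. destruct (Hh (row a)) as (_ & _ & O). split.
    + intros Hab. pose proof (Hmono a b Ha Hb Hab).
      destruct (Nat.eq_dec (row a) (row b)) as [E|E]; [|left; lia].
      right. split; auto. rewrite <- E. apply O; auto.
    + intros [Hlt | [E Hlt]].
      * destruct (Nat.eq_dec a b) as [->|Hab]; [lia|].
        destruct (lo_total X HX a b Ha Hb Hab) as [H|H]; auto.
        pose proof (Hmono b a Hb Ha H). lia.
      * rewrite <- E in Hlt. apply O; auto.
Qed.

Lemma linear_order_gamma S : linear_order S -> linear_order (gamma S).
Proof.
  intros HS. split; cbn [gamma dom rel].
  - intros e (z & y & x & -> & _ & Hzy & _). rewrite gamma_rel_cpair. simpl in Hzy.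
    intros [H | [_ H]]; eapply lo_irrefl; eauto; tauto.
  - intros a b c (z1 & y1 & x1 & -> & _ & H1 & _) (z2 & y2 & x2 & -> & _ & H2 & _)
      (z3 & y3 & x3 & -> & _ & H3 & _).
    simpl in H1, H2, H3. rewrite !gamma_rel_cpair.
    intros [Hab | [<- Hab]] [Hbc | [<- Hbc]]; auto.
    + left. eapply lo_trans; eauto; tauto.
    + right. split; [reflexivity|]. eapply lo_trans; eauto; tauto.
  - intros a b (z1 & y1 & x1 & -> & _ & H1 & _) (z2 & y2 & x2 & -> & _ & H2 & _) Hne.
    simpl in H1, H2. rewrite !gamma_rel_cpair.
    destruct (Nat.eq_dec z1 z2) as [<- | Hz].
    + destruct (Nat.eq_dec y1 y2) as [<- | Hy]; [congruence|].
      destruct (lo_total S HS y1 y2); tauto.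
    + destruct (lo_total S HS z1 z2); tauto.
Qed.

Definition rev_str (X : str) : str := mkStr (dom X) (fun a b => rel X b a).

Lemma linear_order_rev X : linear_order X -> linear_order (rev_str X).
Proof.
  intros HX. split; simpl.
  - apply (lo_irrefl X HX).
  - intros a b c Ha Hb Hc Hab Hbc. exact (lo_trans X HX c b a Hc Hb Ha Hbc Hab).
  - intros a b Ha Hb Hne. destruct (lo_total X HX a b); auto.
Qed.

Lemma iso_to_rev X T (R : T -> T -> Prop) : iso_to (rev_str X) T R -> iso_to X T (rev_ord R).
Proof.
  intros (h & Hinj & Hsur & Hrel). exists h. split; [exact Hinj | split; [exact Hsur|]].
  intros x y Hx Hy. exact (Hrel y x Hy Hx).
Qed.

Definition unpair (e : nat) : nat * nat :=
  match excluded_middle_informative (exists p : nat * nat, e = cpair (fst p) (snd p)) with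
  | left H => proj1_sig (constructive_indefinite_description _ H)
  | right _ => (0, 0)
  end.

Lemma unpair_cpair a b : unpair (cpair a b) = (a, b).
Proof.
  unfold unpair. destruct excluded_middle_informative as [H|H].
  - destruct (constructive_indefinite_description _ H) as [[a' b'] E]. simpl in *.
    now apply cpair_inj in E as [-> ->].
  - exfalso. apply H. now exists (a, b).
Qed.

(** * Gamma(omega.2) and Gamma(omega^*.2) *)

Definition strict_total {T : Type} (R : T -> T -> Prop) : Prop :=
  (forall t, ~ R t t) /\ (forall a b c, R a b -> R b c -> R a c) /\
  (forall a b, a <> b -> R a b \/ R b a).

Definition gamma_pt {T : Type} (R : T -> T -> Prop) (g : T -> nat) (p q : T) : Prop :=
  R p q /\ exists r, R r p /\ g q < g r.

Definition lex {T : Type} (R : T -> T -> Prop) (p q p' q' : T) : Prop :=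
  R p p' \/ (p = p' /\ R q q').

Section ViaGamma.

Context {St : str} {T : Type} {R : T -> T -> Prop} {f : nat -> T} {g : T -> nat}.
Hypothesis HSt : iso_via St R f g.

Lemma linear_order_via : strict_total R -> linear_order St.
Proof.
  intros (Hirr & Htr & Htot). split.
  - intros a Ha. rewrite (via_rel_f HSt) by auto. apply Hirr.
  - intros a b c Ha Hb Hc. rewrite !(via_rel_f HSt) by auto. apply Htr.
  - intros a b Ha Hb Hne. rewrite !(via_rel_f HSt) by auto. apply Htot.
    intros E. apply Hne. now rewrite (via_onto HSt a), (via_onto HSt b), E.
Qed.

Lemma gamma_dom_via e :
  gamma_dom St e <-> exists p q, e = cpair (g p) (g q) /\ gamma_pt R g p q.
Proof.
  split.
  - intros (z & y & x & -> & Hyx & Hzy & Hxz). simpl in Hzy, Hxz.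
    exists (f z), (f y). rewrite <- !(via_onto HSt) by tauto. split; [reflexivity|].
    split; [apply (via_rel_f HSt); tauto|]. exists (f x).
    rewrite <- !(via_onto HSt) by tauto. split; [apply (via_rel_f HSt); tauto | assumption].
  - intros (p & q & -> & Hpq & r & Hrp & Hqr). exists (g p), (g q), (g r).
    pose proof (via_dom HSt). simpl. rewrite !(via_rel HSt). repeat split; auto.
Qed.

Lemma gamma_rel_via p q p' q' :
  gamma_rel St (cpair (g p) (g q)) (cpair (g p') (g q')) <-> lex R p q p' q'.
Proof.
  rewrite gamma_rel_cpair, !(via_rel HSt). unfold lex. split; intros [H | [E H]]; auto.
  - right. split; [now apply (via_g_inj HSt) | assumption].
  - right. now subst.
Qed.

Theorem iso_omegasq_of_point_rows (X : str) (D : T -> T -> Prop)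
    (L : T -> T -> T -> T -> Prop) (row : T -> T -> nat) :
  linear_order X ->
  (forall e, dom X e <-> exists p q, e = cpair (g p) (g q) /\ D p q) ->
  (forall p q p' q', rel X (cpair (g p) (g q)) (cpair (g p') (g q')) <-> L p q p' q') ->
  (forall p q p' q', D p q -> D p' q' -> L p q p' q' -> row p q <= row p' q') ->
  (forall p q, D p q -> exists l, forall p' q', D p' q' -> row p' q' = row p q ->
     L p' q' p q -> In (cpair (g p') (g q')) l) ->
  (forall r, exists p q, D p q /\ row p q = r) ->
  (forall p q, D p q -> exists p' q', D p' q' /\ row p' q' = row p q /\ L p q p' q') ->
  iso_to X (nat * nat) lt_omegasq.
Proof.
  intros HX Hdom Hrel Hmono Hfin Hne Hnomax.
  set (row_code e := row (f (fst (unpair e))) (f (snd (unpair e)))).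
  assert (Hrow : forall p q, row_code (cpair (g p) (g q)) = row p q)
    by (intros; unfold row_code; rewrite unpair_cpair; simpl; now rewrite !(via_fg HSt)).
  apply (iso_omegasq_of_rows X row_code HX).
  - intros a b (p & q & -> & Hpq)%Hdom (p' & q' & -> & Hpq')%Hdom Hab.
    rewrite !Hrow. apply Hrel in Hab. auto.
  - intros a (p & q & -> & Hpq)%Hdom. destruct (Hfin p q Hpq) as [l Hl]. exists l.
    intros b (p' & q' & -> & Hpq')%Hdom. rewrite !Hrow, Hrel. auto.
  - intros r. destruct (Hne r) as (p & q & Hpq & <-). exists (cpair (g p) (g q)).
    rewrite Hdom, Hrow. eauto.
  - intros a (p & q & -> & Hpq)%Hdom. destruct (Hnomax p q Hpq) as (p' & q' & Hpq' & Hr & HL).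
    exists (cpair (g p') (g q')). rewrite Hdom, !Hrow, Hrel. repeat split; eauto.
Qed.

End ViaGamma.

Lemma injective_unbounded (u : nat -> nat) :
  (forall i j, u i = u j -> i = j) -> forall K M, exists n, K <= n /\ M < u n.
Proof.
  intros Hu K M. apply NNPP. intros Hno.
  assert (Hincl : incl (map u (seq K (S (S M)))) (seq 0 (S M))).
  { intros v (n & <- & Hn%in_seq)%in_map_iff. apply in_seq.
    destruct (le_lt_dec (u n) M); [lia | exfalso; apply Hno; exists n; split; [lia | auto]]. }
  apply NoDup_incl_length in Hincl.
  - rewrite length_map, !length_seq in Hincl. lia.
  - apply NoDup_map_NoDup_ForallPairs; [intros i j _ _; apply Hu | apply seq_NoDup].
Qed.

Ltac solve_points :=
  solve [unfold lt_omega2, lt_omegastar2, rev_ord, lex, gamma_pt in *; simpl in *;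
  intuition (try discriminate;
    repeat match goal with H : (_, _) = (_, _) |- _ => injection H as H; subst end;
    simpl in *; lia)].

Lemma strict_total_omega2 : strict_total lt_omega2.
Proof.
  split; [|split].
  - intros [[|] n]; solve_points.
  - intros [[|] n] [[|] m] [[|] k]; solve_points.
  - intros [[|] n] [[|] m] Hne; destruct (lt_eq_lt_dec n m) as [[|]|]; subst; solve_points.
Qed.

Section OmegaTwo.

Variables (St : str) (f : nat -> bool * nat) (g : bool * nat -> nat).
Hypothesis HSt : iso_via St lt_omega2 f g.

Lemma first_copy_unbounded K M : exists n, K <= n /\ M < g (false, n).
Proof.
  apply injective_unbounded. intros i j E. now apply (via_g_inj HSt) in E as [= ->].
Qed.

Definition row2 (p q : bool * nat) : nat := if fst p then S (snd p) else 0.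

Lemma row2_mono p q p' q' : lex lt_omega2 p q p' q' -> row2 p q <= row2 p' q'.
Proof. destruct p as [[|] i], p' as [[|] i']; unfold row2; solve_points. Qed.

Lemma row2_finite p q : gamma_pt lt_omega2 g p q -> exists l, forall p' q',
  gamma_pt lt_omega2 g p' q' -> row2 p' q' = row2 p q -> lex lt_omega2 p' q' p q ->
  In (cpair (g p') (g q')) l.
Proof.
  intros Hpq. destruct p as [[|] j].
  - destruct q as [[|] k]; [|solve_points].
    exists (map (fun k' => cpair (g (true, j)) (g (true, k'))) (seq 0 k)).
    intros [[|] j'] [[|] k'] Hpq' Hrow Hlex; unfold row2 in Hrow; simpl in Hrow; try solve_points.
    injection Hrow as ->. apply in_map_iff. exists k'. split; [reflexivity|].
    apply in_seq. solve_points.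
  - set (B := list_max (map (fun i => g (false, i)) (seq 0 j))).
    exists (flat_map (fun i => map (fun c => cpair (g (false, i)) c) (seq 0 B)) (seq 0 (S j))).
    intros [[|] i] q' (Hpq' & [[|] k] & Hr & Hq) Hrow Hlex; unfold row2 in Hrow; simpl in Hrow;
      try solve_points.
    apply in_flat_map. exists i. split; [apply in_seq; solve_points|].
    apply in_map_iff. exists (g q'). split; [reflexivity|]. apply in_seq.
    enough (g (false, k) <= B) by lia.
    assert (Hmax := proj1 (list_max_le _ B) (Nat.le_refl B)). rewrite Forall_forall in Hmax.
    apply Hmax, in_map_iff. exists k. split; [reflexivity | apply in_seq; solve_points].
Qed.

Lemma row2_inhabited r : exists p q, gamma_pt lt_omega2 g p q /\ row2 p q = r.
Proof.
  destruct r as [|j].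
  - destruct (first_copy_unbounded 0 (g (true, 0))) as (n & _ & Hn).
    exists (false, S n), (true, 0). split; [|reflexivity].
    split; [solve_points|]. exists (false, n). split; [solve_points | exact Hn].
  - destruct (first_copy_unbounded 0 (g (true, S j))) as (n & _ & Hn).
    exists (true, j), (true, S j). split; [|reflexivity].
    split; [solve_points|]. exists (false, n). split; [solve_points | exact Hn].
Qed.

Lemma row2_no_max p q : gamma_pt lt_omega2 g p q -> exists p' q',
  gamma_pt lt_omega2 g p' q' /\ row2 p' q' = row2 p q /\ lex lt_omega2 p q p' q'.
Proof.
  intros Hpq. destruct p as [[|] j].
  - destruct q as [[|] k]; [|solve_points].
    destruct (first_copy_unbounded 0 (g (true, S k))) as (n & _ & Hn).
    exists (true, j), (true, S k). split; [|split; [reflexivity | solve_points]].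
    split; [solve_points|]. exists (false, n). split; [solve_points | exact Hn].
  - destruct (first_copy_unbounded j (g (true, 0))) as (n & Hjn & Hn).
    exists (false, S n), (true, 0). split; [|split; [reflexivity | solve_points]].
    split; [solve_points|]. exists (false, n). split; [solve_points | exact Hn].
Qed.

Theorem gamma_omega2 : iso_to (gamma St) (nat * nat) lt_omegasq.
Proof.
  apply (iso_omegasq_of_point_rows HSt (gamma St) (gamma_pt lt_omega2 g) (lex lt_omega2) row2).
  - apply linear_order_gamma, (linear_order_via HSt), strict_total_omega2.
  - apply (gamma_dom_via HSt).
  - apply (gamma_rel_via HSt).
  - intros; now apply row2_mono.
  - apply row2_finite.
  - apply row2_inhabited.
  - apply row2_no_max.
Qed.

End OmegaTwo.

Lemma strict_total_omegastar2 : strict_total lt_omegastar2.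
Proof.
  split; [|split].
  - intros [[|] n]; solve_points.
  - intros [[|] n] [[|] m] [[|] k]; solve_points.
  - intros [[|] n] [[|] m] Hne; destruct (lt_eq_lt_dec n m) as [[|]|]; subst; solve_points.
Qed.

Section OmegaStarTwo.

Variables (St : str) (f : nat -> bool * nat) (g : bool * nat -> nat).
Hypothesis HSt : iso_via St lt_omegastar2 f g.

Lemma gamma_pt_omegastar2 p q : gamma_pt lt_omegastar2 g p q <-> lt_omegastar2 p q.
Proof.
  split; [intros [H _]; exact H|]. intros Hpq. split; [exact Hpq|].
  destruct (injective_unbounded (fun n => g (false, n))) with (K := S (snd p)) (M := g q)
    as (n & Hn & Hq).
  - intros i j E. now apply (via_g_inj HSt) in E as [= ->].
  - exists (false, n). split; [destruct p as [[|] i]; solve_points | exact Hq].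
Qed.

(* In the reversed order the pairs with first coordinate (false, k) form omega followed by
   k points; those k points are absorbed by the next row. *)
Definition row_star (p q : bool * nat) : nat :=
  match p, q with
  | (true, _), _ => 0
  | (false, k), (true, _) => S k
  | (false, k), (false, _) => S (S k)
  end.

Definition points_below (N : nat) : list (bool * nat) :=
  map (pair false) (seq 0 N) ++ map (pair true) (seq 0 N).

Lemma in_points_below p N : snd p < N -> In p (points_below N).
Proof.
  destruct p as [b n]. intros Hn. apply in_or_app.
  destruct b; [right | left]; apply in_map_iff; exists n; split; auto;
    apply in_seq; simpl in *; lia.
Qed.

Lemma row_star_mono p q p' q' : lt_omegastar2 p q -> lt_omegastar2 p' q' ->
  lex lt_omegastar2 p' q' p q -> row_star p q <= row_star p' q'.
Proof.
  destruct p as [[|] n], q as [[|] m], p' as [[|] n'], q' as [[|] m'];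
    unfold row_star; solve_points.
Qed.

Lemma row_star_bound p q p' q' : lt_omegastar2 p q -> lt_omegastar2 p' q' ->
  row_star p' q' = row_star p q -> lex lt_omegastar2 p q p' q' ->
  snd p' < S (snd p + snd q) /\ snd q' < S (snd p + snd q).
Proof.
  destruct p as [[|] n], q as [[|] m], p' as [[|] n'], q' as [[|] m'];
    unfold row_star; solve_points.
Qed.

Lemma row_star_finite p q : gamma_pt lt_omegastar2 g p q -> exists l, forall p' q',
  gamma_pt lt_omegastar2 g p' q' -> row_star p' q' = row_star p q ->
  lex lt_omegastar2 p q p' q' -> In (cpair (g p') (g q')) l.
Proof.
  intros Hpq%gamma_pt_omegastar2. set (N := S (snd p + snd q)).
  exists (flat_map (fun p' => map (fun q' => cpair (g p') (g q')) (points_below N))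
            (points_below N)).
  intros p' q' Hpq'%gamma_pt_omegastar2 Hrow Hlex.
  destruct (row_star_bound p q p' q' Hpq Hpq' Hrow Hlex) as [Hp' Hq'].
  apply in_flat_map. exists p'. split; [now apply in_points_below|].
  apply in_map_iff. exists q'. split; [reflexivity | now apply in_points_below].
Qed.

Lemma row_star_inhabited r : exists p q, gamma_pt lt_omegastar2 g p q /\ row_star p q = r.
Proof.
  destruct r as [|k]; [exists (true, 1), (true, 0) | exists (false, k), (true, 0)];
    rewrite gamma_pt_omegastar2; split; solve [reflexivity | solve_points].
Qed.

Lemma row_star_no_max p q : gamma_pt lt_omegastar2 g p q -> exists p' q',
  gamma_pt lt_omegastar2 g p' q' /\ row_star p' q' = row_star p q /\
  lex lt_omegastar2 p' q' p q.
Proof.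
  rewrite gamma_pt_omegastar2. intros Hpq.
  destruct p as [[|] j]; [|destruct q as [[|] l]];
    [ exists (true, S j), (true, 0) | exists (false, j), (true, S l)
    | exists (false, S j), (true, 0) ];
    rewrite gamma_pt_omegastar2; repeat split; solve [reflexivity | solve_points].
Qed.

Theorem gamma_omegastar2 : iso_to (gamma St) (nat * nat) (rev_ord lt_omegasq).
Proof.
  apply iso_to_rev.
  apply (iso_omegasq_of_point_rows HSt (rev_str (gamma St)) (gamma_pt lt_omegastar2 g)
           (fun p q p' q' => lex lt_omegastar2 p' q' p q) row_star).
  - apply linear_order_rev, linear_order_gamma, (linear_order_via HSt), strict_total_omegastar2.
  - apply (gamma_dom_via HSt).
  - intros. apply (gamma_rel_via HSt).
  - intros p q p' q' Hpq Hpq'. rewrite gamma_pt_omegastar2 in Hpq, Hpq'. now apply row_star_mono.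
  - apply row_star_finite.
  - apply row_star_inhabited.
  - apply row_star_no_max.
Qed.

End OmegaStarTwo.

Lemma least_omega2 : has_least_rel lt_omega2.
Proof. red. exists (false, 0). intros [[|] [|n]] Hne; solve [congruence | solve_points]. Qed.

Lemma no_least_omegastar2 : ~ has_least_rel lt_omegastar2.
Proof.
  intros [[b n] H]. specialize (H (b, S n) ltac:(intros [= E]; lia)).
  unfold lt_omegastar2, rev_ord in H. simpl in H.
  destruct H as [[E1 E2] | [_ H]]; [congruence | lia].
Qed.

Lemma least_omegasq : has_least_rel lt_omegasq.
Proof.
  red. exists (0, 0). intros [[|i] [|j]] Hne; unfold lt_omegasq; simpl; [congruence | lia ..].
Qed.

Lemma no_least_rev_omegasq : ~ has_least_rel (rev_ord lt_omegasq).
Proof.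
  intros [[i j] H]. specialize (H (S i, 0) ltac:(intros [= E]; lia)).
  unfold rev_ord, lt_omegasq in H. simpl in H. lia.
Qed.

Lemma class_linear_order A : class2 lt_omega2 lt_omegastar2 A -> linear_order A.
Proof.
  intros [HA | HA]; destruct (iso_to_inverse _ _ _ HA) as (f & g & Hfg);
    apply (linear_order_via Hfg); auto using strict_total_omega2, strict_total_omegastar2.
Qed.

Lemma gamma_class A : class2 lt_omega2 lt_omegastar2 A ->
  class2 lt_omegasq (rev_ord lt_omegasq) (gamma A).
Proof.
  intros [HA | HA]; destruct (iso_to_inverse _ _ _ HA) as (f & g & Hfg);
    [left; exact (gamma_omega2 A f g Hfg) | right; exact (gamma_omegastar2 A f g Hfg)].
Qed.

Lemma gamma_has_least A : class2 lt_omega2 lt_omegastar2 A ->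
  (has_least (gamma A) <-> has_least A).
Proof.
  intros [HA | HA]; destruct (iso_to_inverse _ _ _ HA) as (f & g & Hfg);
    rewrite (iso_to_has_least _ _ _ HA).
  - rewrite (iso_to_has_least _ _ _ (gamma_omega2 A f g Hfg)).
    pose proof least_omega2. pose proof least_omegasq. tauto.
  - rewrite (iso_to_has_least _ _ _ (gamma_omegastar2 A f g Hfg)).
    pose proof no_least_omegastar2. pose proof no_least_rev_omegasq. tauto.
Qed.

Lemma Gamma_output A GA : linear_order A ->
  (forall phi, apply_op Gamma (diagram A) phi <-> diagram GA phi) ->
  forall phi, diagram (gamma A) phi <-> diagram GA phi.
Proof. intros HA E phi. rewrite <- E. symmetry. now apply Gamma_diagram. Qed.

Theorem theorem3p2 :
  comp_reducible (class2 lt_omega2 lt_omegastar2)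
                 (class2 lt_omegasq (rev_ord lt_omegasq)).
Proof.
  exists Gamma. split; [exact Gamma_ce | split].
  - intros A HA. exists (gamma A). split; [now apply gamma_class|].
    now apply Gamma_diagram, class_linear_order.
  - intros A B GA GB HA HB EA EB.
    pose proof (Gamma_output A GA (class_linear_order A HA) EA) as DA.
    pose proof (Gamma_output B GB (class_linear_order B HB) EB) as DB.
    transitivity (iso (gamma A) (gamma B)).
    + rewrite (iso_class2_iff _ _ A B least_omega2 no_least_omegastar2 HA HB),
        (iso_class2_iff _ _ _ _ least_omegasq no_least_rev_omegasq (gamma_class A HA)
           (gamma_class B HB)), !gamma_has_least by assumption.
      reflexivity.
    + split; intros Hiso; eapply iso_diagram; try exact Hiso; intros phi;
        rewrite ?DA, ?DB; reflexivity.
Qed.
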